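(* Let $\alpha>d$ and $\kappa\ge0$ be integers with $\alpha>d-\kappa$, and let $\delta_\varepsilon=\varepsilon^{\frac{2\kappa+2\alpha}{2\kappa+2\alpha+d}}$. There is $a>0$ such that for all $M>1$, all $\varepsilon>0$ and all $F\in\mathrm{span}\{\Psi_{\mathcal O}\}$ with $\|F\|_{H^{\alpha-d/2}(\mathbb R^d)}\le M\delta_\varepsilon/\varepsilon$, there is a decomposition $F=F_1+F_2$ with $F_1,F_2\in\mathrm{span}\{\Psi_{\mathcal O}\}$, $\|F_1\|_{(H^\kappa(\mathbb R^d))^*}\le\delta_\varepsilon^3/\varepsilon^2$ and $\|F_2\|_{B^\alpha_{11}(\mathbb R^d)}\le aM^2\delta_\varepsilon^2/\varepsilon^2$.
   Context: $\mathcal O\subset\mathbb R^d$ nonempty bounded open with smooth boundary. $\Psi$ is an orthonormal basis of $L^2(\mathbb R^d)$ of compactly supported Daubechies wavelets of regularity $S>\alpha$; $\Psi_{\mathcal O}=\{\psi_{kl}:k\ge1,1\le l\le L_k\}$ are those whose supports meet $\mathcal O$, $L_k\simeq2^{dk}$; $\mathrm{span}\{\Psi_{\mathcal O}\}$ consists of $F=\sum_{k,l}F_{kl}\psi_{kl}$, $F_{kl}=\langle F,\psi_{kl}\rangle$. For such $F$ the norms are given by the wavelet characterisation $\|F\|_{B^s_{pq}(\mathbb R^d)}=\big(\sum_k2^{qk(s+d/2-d/p)}(\sum_l|F_{kl}|^p)^{q/p}\big)^{1/q}$; in particular $\|F\|^2_{H^{\alpha-d/2}(\mathbb R^d)}=\sum_k2^{(2\alpha-d)k}\sum_lF_{kl}^2$,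 $\|F\|^2_{(H^\kappa(\mathbb R^d))^*}=\|F\|^2_{H^{-\kappa}(\mathbb R^d)}=\sum_k2^{-2\kappa k}\sum_lF_{kl}^2$ and $\|F\|_{B^\alpha_{11}(\mathbb R^d)}=\sum_k2^{(\alpha-d/2)k}\sum_l|F_{kl}|$. *)

From HB Require Import structures.
From mathcomp Require Import all_boot all_order all_algebra.
From mathcomp Require Import all_classical all_reals all_analysis.
Set Implicit Arguments. Unset Strict Implicit. Unset Printing Implicit Defensive.
Import Order.TTheory GRing.Theory Num.Theory.
Local Open Scope ring_scope.

(* An element F of span{Psi_O} is represented by its wavelet coefficients
   F k l = <F, psi_kl>; the index set is {(k,l) : 1 <= k, 1 <= l <= L k}. *)
Definition coefs (R : realType) := nat -> nat -> R.

Definition in_span (R : realType) (L : nat -> nat) (F : coefs R) : Prop :=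
  forall k l, ~ [/\ (1 <= k)%N, (1 <= l)%N & (l <= L k)%N] -> F k l = 0.

Definition sqrte (R : realType) (x : \bar R) : \bar R :=
  match x with
  | EFin r => (Num.sqrt r)%:E
  | _ => +oo%E
  end.

(* ||F||_{H^{alpha - d/2}(R^d)} = (sum_k 2^{(2alpha-d)k} sum_l F_kl^2)^{1/2} *)
Definition H_norm (R : realType) (d alpha : nat) (L : nat -> nat) (F : coefs R)
  : \bar R :=
  sqrte (\sum_(1 <= k <oo)
     ((2 : R) `^ ((2 * alpha%:R - d%:R) * k%:R)
        * \sum_(1 <= l < (L k).+1) F k l ^+ 2)%:E)%E.

(* ||F||_{(H^kappa(R^d))^*} = ||F||_{H^{-kappa}} = (sum_k 2^{-2 kappa k} sum_l F_kl^2)^{1/2} *)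
Definition Hdual_norm (R : realType) (kappa : nat) (L : nat -> nat) (F : coefs R)
  : \bar R :=
  sqrte (\sum_(1 <= k <oo)
     ((2 : R) `^ (- (2 * kappa%:R) * k%:R)
        * \sum_(1 <= l < (L k).+1) F k l ^+ 2)%:E)%E.

(* ||F||_{B^alpha_{11}(R^d)} = sum_k 2^{(alpha - d/2)k} sum_l |F_kl| *)
Definition B11_norm (R : realType) (d alpha : nat) (L : nat -> nat) (F : coefs R)
  : \bar R :=
  (\sum_(1 <= k <oo)
     ((2 : R) `^ ((alpha%:R - d%:R / 2) * k%:R)
        * \sum_(1 <= l < (L k).+1) `|F k l|)%:E)%E.

Definition delta (R : realType) (d alpha kappa : nat) (eps : R) : R :=
  eps `^ ((2 * kappa%:R + 2 * alpha%:R) / (2 * kappa%:R + 2 * alpha%:R + d%:R)).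

From Pilot Require Import Defs.
From HB Require Import structures.
From mathcomp Require Import all_boot all_order all_algebra.
From mathcomp Require Import all_classical all_reals all_analysis.
From mathcomp Require Import ring lra zify.
Set Implicit Arguments. Unset Strict Implicit. Unset Printing Implicit Defensive.
Import Order.TTheory GRing.Theory Num.Theory.
Local Open Scope ring_scope.

(* Split F at a dyadic level J into its levels k > J (F1) and k <= J (F2).
   For k > J the dual weight 2^(-2 kappa k) is at most 2^(-n (J+1)) times the
   H^(alpha - d/2) weight, n = 2 kappa + 2 alpha - d, so F1 is small once
   2^(n (J+1)) exceeds (M delta / eps)^2 / (delta^3 / eps^2)^2.  For k <= J the
   AM-GM bound w |f| <= (w^2 f^2 + 1) / 2 estimates the B^alpha_11 norm of F2 by
   half the squared H^(alpha - d/2) norm plus half the number of coefficients,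
   which is O(2^(d J)).  The exponent of delta is exactly the one for which the
   least admissible J also satisfies 2^(d J) <= (M delta / eps)^2. *)

(* [Defs.sqrte], not the library's [sqrte], which sends -oo to 0. *)
Lemma sqrte_le_EFin (R : realType) (s : \bar R) (b : R) :
  (0 <= s)%E -> 0 <= b -> (Defs.sqrte s <= b%:E)%E = (s <= (b ^+ 2)%:E)%E.
Proof.
case: s => [r r0 b0|_ _|//]; last by rewrite !leye_eq.
by rewrite /= !lee_fin -[RHS]ler_sqrt ?sqr_ge0 // sqrtr_sqr ger0_norm.
Qed.

Lemma mul_norm_le_half_sqrD1 (R : realFieldType) (w f : R) :
  0 <= w -> w * `|f| <= (w ^+ 2 * f ^+ 2 + 1) / 2.
Proof.
move=> w0; have : 0 <= (w * `|f| - 1) ^+ 2 by apply: sqr_ge0.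
rewrite -[f ^+ 2]real_normK ?num_real //; nra.
Qed.

Lemma sum_geometric_le (R : realFieldType) (q : R) (J : nat) : 2 <= q ->
  \sum_(1 <= k < J.+1) q ^+ k <= 2 * q ^+ J.
Proof.
move=> q2; elim: J => [|J IH]; first by rewrite big_geq // mulr_ge0 ?exprn_ge0 //; lra.
rewrite big_nat_recr //= exprS.
have : 0 <= q ^+ J by rewrite exprn_ge0 //; lra.
nra.
Qed.

Lemma sum_levels_le (R : realFieldType) (L : nat -> nat) (d J : nat) (c B : R) :
  (0 < d)%N -> 0 <= c -> 0 <= B ->
  (forall k, (1 <= k)%N -> (L k)%:R <= c * 2 ^+ (d * k)) ->
  ((0 < J)%N -> 2 ^+ (d * J) <= B) ->
  \sum_(1 <= k < J.+1) (L k)%:R / 2 <= c * B.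
Proof.
move=> d0 c0 B0 Lk JB; have [->|J0] := posnP J; first by rewrite big_geq ?mulr_ge0.
apply: le_trans (_ : \sum_(1 <= k < J.+1) c * (2 ^+ d) ^+ k / 2 <= _).
  by apply: ler_sum_nat => k /andP[k1 _]; rewrite -exprM ler_pM2r ?Lk.
rewrite -mulr_suml -mulr_sumr -mulrA; apply: (ler_wpM2l c0).
apply: le_trans (_ : 2 * (2 ^+ d) ^+ J / 2 <= _).
  rewrite ler_pM2r // sum_geometric_le //.
  by have := ler_weXn2l (ler1n R 2) d0; rewrite expr1.
by rewrite mulrC mulKf // -exprM JB.
Qed.

Lemma exists_dyadic_level (R : realType) (Q : R) (n : nat) : (0 < n)%N ->
  exists J, Q <= 2 ^+ (n * J.+1) /\ ((0 < J)%N -> 2 ^+ (n * J) < Q).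
Proof.
move=> n0; have exJ : exists J, Q <= 2 ^+ (n * J.+1).
  exists (Num.Def.archi_bound Q); apply/ltW/upper_nthrootP.
  exact: leq_trans (leqnSn _) (leq_pmull _ n0).
have [J QJ Jmin] := ex_minnP exJ; exists J; split=> // J0.
rewrite ltNge; apply/negP => QJ'.
have := Jmin J.-1; rewrite prednK // => /(_ QJ').
by rewrite leqNgt ltn_predL J0.
Qed.

Lemma expr_le_of_balance (R : realFieldType) (M x y T : R) (d n : nat) :
  1 <= M -> 0 < x -> 0 < y -> 0 <= T -> (0 < d <= n)%N ->
  y ^+ d * x ^+ n = 1 -> T ^+ n < M ^+ 2 / y ^+ 2 -> T ^+ d <= M ^+ 2 * x ^+ 2.
Proof.
move=> M1 x0 y0 T0 /andP[d0 dn] yx TQ.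
have n0 : (0 < n)%N by apply: leq_trans dn.
have xy : (y ^+ d)^-1 = x ^+ n by rewrite -[LHS]mulr1 -yx mulKf // expf_neq0 ?gt_eqF.
have Mx0 : 0 <= M ^+ 2 * x ^+ 2 by rewrite mulr_ge0 ?sqr_ge0.
apply: ltW; rewrite -(ltr_pXn2r n0) ?nnegrE ?exprn_ge0 // -exprM mulnC exprM.
apply: lt_le_trans (_ : (M ^+ 2 / y ^+ 2) ^+ d <= _).
  by rewrite (ltr_pXn2r d0) ?nnegrE ?exprn_ge0 ?divr_ge0 ?sqr_ge0.
have -> : (M ^+ 2 / y ^+ 2) ^+ d = (M ^+ d) ^+ 2 * (x ^+ n) ^+ 2.
  by rewrite -xy expr_div_n exprVn -!exprM !(mulnC 2 d).
rewrite exprMn -!exprM !(mulnC 2 n) !exprM ler_pM2r ?exprn_gt0 //.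
have M0 : 0 <= M ^+ d by rewrite exprn_ge0 // (le_trans ler01).
by rewrite (ler_pXn2r (isT : (0 < 2)%N)) ?nnegrE ?(le_trans M0) // ler_weXn2l.
Qed.

Lemma exists_cutoff_level (R : realType) (M x y : R) (d n : nat) :
  1 <= M -> 0 < x -> 0 < y -> (0 < d <= n)%N -> y ^+ d * x ^+ n = 1 ->
  exists J, (M * x) ^+ 2 <= 2 ^+ (n * J.+1) * (x * y) ^+ 2 /\
            ((0 < J)%N -> 2 ^+ (d * J) <= (M * x) ^+ 2).
Proof.
move=> M1 x0 y0 dn yx; have n0 : (0 < n)%N by case/andP: dn => /leq_trans; apply.
have [J [QJ JQ]] := exists_dyadic_level (M ^+ 2 / y ^+ 2) n0.
exists J; split=> [|J0].
  have -> : (M * x) ^+ 2 = M ^+ 2 / y ^+ 2 * (x * y) ^+ 2.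
    by rewrite !exprMn; field; rewrite gt_eqF.
  by rewrite ler_wpM2r ?sqr_ge0.
rewrite exprMn mulnC exprM.
apply: (expr_le_of_balance M1 x0 y0 (exprn_ge0 _ (ler0n _ 2)) dn yx).
by rewrite -exprM mulnC JQ.
Qed.

Lemma delta_exprD (R : realType) (d alpha kappa : nat) (eps : R) :
  0 < eps -> (0 < 2 * kappa + 2 * alpha + d)%N ->
  delta d alpha kappa eps ^+ (2 * kappa + 2 * alpha + d) =
  eps ^+ (2 * kappa + 2 * alpha).
Proof.
move=> eps0 n0; rewrite /delta -powR_mulrn ?powR_ge0 // -powRrM -powR_mulrn ?ltW //.
congr (_ `^ _); rewrite -[2 * kappa%:R]natrM -[2 * alpha%:R]natrM -!natrD.
by rewrite divfK // pnatr_eq0 -lt0n.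
Qed.

Lemma delta_balance (R : realType) (d alpha kappa : nat) (eps : R) :
  0 < eps -> (0 < d <= 2 * kappa + 2 * alpha)%N ->
  (delta d alpha kappa eps ^+ 2 / eps) ^+ d *
    (delta d alpha kappa eps / eps) ^+ (2 * kappa + 2 * alpha - d) = 1.
Proof.
move=> eps0 /andP[d0 dle].
rewrite !expr_div_n -exprM mulf_div -!exprD.
rewrite (_ : (2 * d + _ = 2 * kappa + 2 * alpha + d)%N); last by lia.
rewrite (_ : (d + _ = 2 * kappa + 2 * alpha)%N); last by lia.
by rewrite delta_exprD ?addn_gt0 ?d0 ?orbT // divff // expf_neq0 ?gt_eqF.
Qed.

Section WeightedSums.
Variables (R : realType) (L : nat -> nat).

(* [H_norm] and [Hdual_norm] are [sqrte] of [wsq], and [B11_norm] is [wl1],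
   for the corresponding weights. *)
Definition wsq (w : nat -> R) (F : coefs R) : \bar R :=
  (\sum_(1 <= k <oo) (w k * \sum_(1 <= l < (L k).+1) F k l ^+ 2)%:E)%E.

Definition wl1 (w : nat -> R) (F : coefs R) : \bar R :=
  (\sum_(1 <= k <oo) (w k * \sum_(1 <= l < (L k).+1) `|F k l|)%:E)%E.

Definition low_pass (J : nat) (F : coefs R) : coefs R :=
  fun k l => if (k <= J)%N then F k l else 0.

Definition high_pass (J : nat) (F : coefs R) : coefs R :=
  fun k l => if (J < k)%N then F k l else 0.

Lemma in_span_low_pass J F : in_span L F -> in_span L (low_pass J F).
Proof. by move=> hF k l kl; rewrite /low_pass hF // if_same. Qed.

Lemma in_span_high_pass J F : in_span L F -> in_span L (high_pass J F).
Proof. by move=> hF k l kl; rewrite /high_pass hF // if_same. Qed.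

Lemma high_pass_add_low_pass J F k l :
  F k l = high_pass J F k l + low_pass J F k l.
Proof. by rewrite /high_pass /low_pass; case: ltnP; rewrite ?add0r ?addr0. Qed.

Lemma sum_sqr_ge0 (G : coefs R) k : 0 <= \sum_(1 <= l < (L k).+1) G k l ^+ 2.
Proof. by rewrite sumr_ge0 // => l _; rewrite sqr_ge0. Qed.

Lemma wsq_ge0 w F : (forall k, 0 <= w k) -> (0 <= wsq w F)%E.
Proof.
by move=> w0; apply: nneseries_ge0 => k _ _; rewrite lee_fin mulr_ge0 ?sum_sqr_ge0.
Qed.

Lemma wsq_high_pass_le (v w : nat -> R) (c : R) J F :
  0 <= c -> (forall k, 0 <= v k) -> (forall k, 0 <= w k) ->
  (forall k, (J < k)%N -> v k <= c * w k) ->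
  (wsq v (high_pass J F) <= c%:E * wsq w F)%E.
Proof.
move=> c0 v0 w0 vw; rewrite -nneseriesZl => [|k _]; last first.
  by rewrite lee_fin mulr_ge0 ?sum_sqr_ge0.
apply: lee_nneseries => [k _ _|k _]; first by rewrite lee_fin mulr_ge0 ?sum_sqr_ge0.
rewrite -EFinM lee_fin mulrA /high_pass; case: ltnP => [Jk|_].
  by rewrite ler_wpM2r ?sum_sqr_ge0 ?vw.
by rewrite big1 ?mulr0 ?mulr_ge0 ?sum_sqr_ge0 // => l _; rewrite expr0n.
Qed.

Lemma wl1_low_pass_le (u : nat -> R) J F : (forall k, 0 <= u k) ->
  (wl1 u (low_pass J F) <=
   2^-1%:E * wsq (fun k => (u k ^+ 2)%R) F + (\sum_(1 <= k < J.+1) (L k)%:R / 2)%:E)%E.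
Proof.
move=> u0; pose e k : R := if (k <= J)%N then (L k)%:R / 2 else 0.
have e0 k : 0 <= e k by rewrite /e; case: ifP.
have -> : (\sum_(1 <= k < J.+1) (L k)%:R / 2)%:E = (\sum_(1 <= k <oo) (e k)%:E)%E.
  rewrite (nneseries_split 1 J) => [|k _]; last by rewrite lee_fin.
  rewrite eseries0 => [|k Jk _]; last by rewrite /e leqNgt -add1n Jk.
  rewrite adde0 sumEFin add1n; congr (_%:E); apply: eq_big_nat => k /andP[_ kJ].
  by rewrite /e -ltnS kJ.
rewrite -nneseriesZl => [|k _]; last by rewrite lee_fin mulr_ge0 ?sqr_ge0 ?sum_sqr_ge0.
rewrite -nneseriesD => [|k _ _|k _ _]; last 2 first.
- by rewrite -EFinM lee_fin mulr_ge0 ?mulr_ge0 ?sqr_ge0 ?sum_sqr_ge0.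
- by rewrite lee_fin.
apply: lee_nneseries => [k _ _|k _].
  by rewrite lee_fin mulr_ge0 ?sumr_ge0.
rewrite -EFinM -EFinD lee_fin /e /low_pass; case: leqP => kJ; last first.
  by rewrite big1 ?mulr0 ?addr0 ?mulr_ge0 ?sqr_ge0 ?sum_sqr_ge0 // => l _; rewrite normr0.
rewrite [u k * _]mulr_sumr; apply: le_trans (_ : \sum_(1 <= l < (L k).+1)
    (u k ^+ 2 * F k l ^+ 2 + 1) / 2 <= _).
  by apply: ler_sum => l _; apply: mul_norm_le_half_sqrD1.
by rewrite -mulr_suml big_split /= sumr_const_nat subn1 -mulr_sumr mulrDl mulrC.
Qed.

End WeightedSums.

Lemma powR_natrM (R : realType) (a : R) (m k : nat) : 0 <= a ->
  a `^ (m%:R * k%:R) = a ^+ (m * k).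
Proof. by move=> a0; rewrite -natrM powR_mulrn. Qed.

Lemma B11_weight_sqr (R : realType) (d alpha k : nat) :
  ((2 : R) `^ ((alpha%:R - d%:R / 2) * k%:R)) ^+ 2 =
  (2 : R) `^ ((2 * alpha%:R - d%:R) * k%:R).
Proof.
rewrite -powR_mulrn ?powR_ge0 // -powRrM; congr (_ `^ _).
by rewrite mulrC mulrA mulrBr mulrCA divff ?pnatr_eq0 // mulr1.
Qed.

Lemma dual_weight_le (R : realType) (d alpha kappa J k : nat) :
  (d <= 2 * alpha)%N -> (J < k)%N ->
  (2 : R) `^ (- (2 * kappa%:R) * k%:R) <=
  (2 ^+ ((2 * kappa + 2 * alpha - d) * J.+1))^-1 *
    (2 : R) `^ ((2 * alpha%:R - d%:R) * k%:R).
Proof.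
move=> d2a Jk; set n := (2 * kappa + 2 * alpha - d)%N.
rewrite mulNr powRN -[2 * kappa%:R]natrM -[2 * alpha%:R]natrM -natrB //.
rewrite !powR_natrM // (_ : (2 : R) ^+ ((2 * alpha - d) * k) =
    2 ^+ (n * k) / 2 ^+ (2 * kappa * k)); last first.
  have -> : (n * k = (2 * alpha - d) * k + 2 * kappa * k)%N.
    by rewrite -mulnDl /n; congr (_ * _)%N; lia.
  by rewrite exprD mulfK // expf_neq0.
rewrite mulrA ler_peMl ?invr_ge0 ?exprn_ge0 // mulrC ler_pdivlMr ?exprn_gt0 // mul1r.
by rewrite ler_eXn2l ?ltr1n // leq_mul2l Jk orbT.
Qed.

Lemma Hdual_norm_high_pass_le (R : realType) (d alpha kappa : nat) (L : nat -> nat)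
    (F : coefs R) (J : nat) (B b : R) :
  (d <= 2 * alpha)%N -> 0 <= B -> 0 <= b ->
  (H_norm d alpha L F <= B%:E)%E ->
  B ^+ 2 <= 2 ^+ ((2 * kappa + 2 * alpha - d) * J.+1) * b ^+ 2 ->
  (Hdual_norm kappa L (high_pass J F) <= b%:E)%E.
Proof.
move=> d2a B0 b0; set P := (2 : R) ^+ _ => hF hB.
have pow_ge0 (e : R) k : 0 <= (2 : R) `^ (e * k%:R) by exact: powR_ge0.
rewrite /H_norm -/(wsq L _ _) sqrte_le_EFin ?wsq_ge0 // in hF.
rewrite /Hdual_norm -/(wsq L _ _) sqrte_le_EFin ?wsq_ge0 //.
have c0 : 0 <= P^-1 by rewrite invr_ge0 exprn_ge0.
have vw k : (J < k)%N -> _ := @dual_weight_le R _ _ kappa J k d2a.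
apply: le_trans (wsq_high_pass_le L F c0 _ _ vw) _ => //.
apply: le_trans (lee_wpmul2l _ hF) _; first by rewrite lee_fin.
by rewrite -EFinM lee_fin mulrC ler_pdivrMr ?exprn_gt0 // mulrC.
Qed.

Lemma B11_norm_low_pass_le (R : realType) (d alpha : nat) (L : nat -> nat)
    (F : coefs R) (J : nat) (c B : R) :
  (0 < d)%N -> 0 <= c -> 0 <= B ->
  (forall k, (1 <= k)%N -> (L k)%:R <= c * 2 ^+ (d * k)) ->
  (H_norm d alpha L F <= B%:E)%E ->
  ((0 < J)%N -> 2 ^+ (d * J) <= B ^+ 2) ->
  (B11_norm d alpha L (low_pass J F) <= ((2^-1 + c) * B ^+ 2)%:E)%E.
Proof.
move=> d0 c0 B0 Lk hF JB.
pose u k : R := 2 `^ ((alpha%:R - d%:R / 2) * k%:R).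
have u0 k : 0 <= u k by exact: powR_ge0.
have -> : B11_norm d alpha L (low_pass J F) = wl1 L u (low_pass J F) by [].
apply: le_trans (wl1_low_pass_le L J F u0) _.
have -> : (fun k => u k ^+ 2) = fun k => 2 `^ ((2 * alpha%:R - d%:R) * k%:R).
  by apply/funext => k; exact: B11_weight_sqr.
rewrite /H_norm -/(wsq L _ _) sqrte_le_EFin // in hF; last first.
  by apply: wsq_ge0 => k; exact: powR_ge0.
rewrite (mulrDl _ _ (B ^+ 2)) EFinD; apply: leeD.
  by rewrite EFinM lee_wpmul2l // lee_fin.
by rewrite lee_fin (sum_levels_le d0) ?sqr_ge0.
Qed.

Theorem lemmaB3 (R : realType) (d alpha kappa : nat) (L : nat -> nat)
  (hd : (1 <= d)%N) (halpha : (d < alpha)%N) (hak : (d < alpha + kappa)%N)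
  (hL : exists c1 c2 : R, [/\ 0 < c1, 0 < c2 &
          forall k : nat, (1 <= k)%N ->
            c1 * 2 ^+ (d * k) <= (L k)%:R /\ (L k)%:R <= c2 * 2 ^+ (d * k)]) :
  exists a : R, 0 < a /\
    forall (M eps : R) (F : coefs R), 1 < M -> 0 < eps -> in_span L F ->
      (H_norm d alpha L F <= (M * delta d alpha kappa eps / eps)%:E)%E ->
      exists F1 F2 : coefs R,
        [/\ in_span L F1, in_span L F2,
            (forall k l, F k l = F1 k l + F2 k l),
            (Hdual_norm kappa L F1 <=
               (delta d alpha kappa eps ^+ 3 / eps ^+ 2)%:E)%E &
            (B11_norm d alpha L F2 <=
               (a * M ^+ 2 * delta d alpha kappa eps ^+ 2 / eps ^+ 2)%:E)%E].
Proof.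
set n := (2 * kappa + 2 * alpha - d)%N.
have d2a : (d <= 2 * alpha)%N by lia.
have dn : (0 < d <= n)%N by rewrite /n; lia.
have dle : (0 < d <= 2 * kappa + 2 * alpha)%N by lia.
case: hL => c1 [c2 [_ c20 hL]].
exists (1 + c2); split=> [|M eps F M1 eps0 hF]; first lra.
set D := delta d alpha kappa eps; set x := D / eps; set y := D ^+ 2 / eps.
rewrite -mulrA -/x => hF_M.
have D0 : 0 < D by exact: powR_gt0.
have [x0 y0] : 0 < x /\ 0 < y by split; rewrite divr_gt0 ?exprn_gt0.
have Mx0 : 0 < M * x by rewrite mulr_gt0 // (lt_trans ltr01).
have [J [hiJ loJ]] := exists_cutoff_level (ltW M1) x0 y0 dn (delta_balance eps0 dle).
exists (high_pass J F), (low_pass J F); split.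
- exact: in_span_high_pass.
- exact: in_span_low_pass.
- exact: high_pass_add_low_pass.
- apply: (Hdual_norm_high_pass_le d2a (ltW Mx0) _ hF_M).
    by rewrite divr_ge0 ?exprn_ge0 ?ltW.
  by rewrite (_ : D ^+ 3 / eps ^+ 2 = x * y) // /x /y mulf_div -exprS -expr2.
- have hL2 k : (1 <= k)%N -> (L k)%:R <= c2 * 2 ^+ (d * k) by case/hL.
  apply: le_trans (B11_norm_low_pass_le hd (ltW c20) (ltW Mx0) hL2 hF_M loJ) _.
  rewrite lee_fin (_ : _ * D ^+ 2 / _ = (1 + c2) * (M * x) ^+ 2).
    by rewrite ler_pM2r ?exprn_gt0 // lerD2r invf_le1 ?ler1n.
  by rewrite /x [(M * _) ^+ 2]exprMn expr_div_n !mulrA.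
Qed.
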